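(* The category $\underline{\mathrm{G}}$ of globally hyperbolic posets is equivalent to the category $\underline{\mathrm{IN}}$ of interval domains.
   Context: Order notions: directed/filtered sets, suprema $\bigsqcup$, infima $\bigwedge$, the way-below relation $x\ll y$ (for every directed $S$ with a supremum, $y\sqsubseteq\bigsqcup S$ implies $x\sqsubseteq s$ for some $s\in S$), $\Uparrow x=\{a:x\ll a\}$, $\Downarrow x=\{a:a\ll x\}$; a poset is continuous if some subset $B$ has $B\cap\Downarrow x$ containing a directed set with supremum $x$ for every $x$; a continuous dcpo additionally has suprema of all directed sets; $\max(D)$ is the set of maximal elements; the Scott topology consists of upper sets $U$ with $\bigsqcup S\in U\Rightarrow S\cap U\neq\emptyset$ for directed $S$. A continuous poset is bicontinuous if (1) $x\ll y$ iff for every filtered $S$ with an infimum, $\bigwedge S\sqsubseteq x$ implies $s\sqsubseteq y$ for some $s\in S$, and (2) each $\Uparrow x$ is filtered with infimum $x$; its interval topology has basis $\{z: a\ll z\ll b\}$. A globally hyperbolic poset is a bicontinuous poset $(X,\le)$ whose closed intervals $[a,b]=\{z:a\le z\le b\}$ are compact in the interval topology. $\underline{\mathrm{G}}$ is the category whose objects are globally hyperbolic posets and whose arrows are monotone maps continuous for the interval topologies (usual identities and composition). An interval poset is a poset $D$ with maps $\mathrm{left},\mathrm{right}:D\to\max(D)$ such that (writing $\sqcap$ for binary infimum, assumed to exist only where named) $x=\mathrm{left}(x)\sqcap\mathrm{right}(x)$; if $\mathrm{right}(x)=\mathrm{left}(y)$ then $\mathrm{left}(x\sqcap y)=\mathrm{left}(x)$,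 $\mathrm{right}(x\sqcap y)=\mathrm{right}(y)$; and for $p\in\max(D)$ with $x\sqsubseteq p$, $\mathrm{left}(\mathrm{left}(x)\sqcap p)=\mathrm{left}(x)$, $\mathrm{right}(\mathrm{left}(x)\sqcap p)=p$, $\mathrm{left}(p\sqcap\mathrm{right}(x))=p$, $\mathrm{right}(p\sqcap\mathrm{right}(x))=\mathrm{right}(x)$. Define $a\le b$ on $\max(D)$ iff $a=\mathrm{left}(z),b=\mathrm{right}(z)$ for some $z$; let $[p,\cdot]=\mathrm{left}^{-1}(p)$, $[\cdot,q]=\mathrm{right}^{-1}(q)$. An interval domain is an interval poset with $D$ a continuous dcpo such that: (i) if $p\in\Uparrow x\cap\max(D)$ then $\Uparrow(\mathrm{left}(x)\sqcap p)$ and $\Uparrow(p\sqcap\mathrm{right}(x))$ are nonempty; (ii) for each $x$, TFAE: $\Uparrow x\neq\emptyset$; for all $y\in[\mathrm{left}(x),\cdot]$ with $y\sqsubseteq x$, $y\ll\mathrm{right}(y)$ in the subposet $[\cdot,\mathrm{right}(y)]$; for all $y\in[\cdot,\mathrm{right}(x)]$ with $y\sqsubseteq x$, $y\ll\mathrm{left}(y)$ in the subposet $[\mathrm{left}(y),\cdot]$; (iii) for directed $S\subseteq[p,\cdot]$, $\mathrm{left}(\bigsqcup S)=p$ and $\mathrm{right}(\bigsqcup S)=\mathrm{right}(\bigsqcup T)$ for every directed $T\subseteq[q,\cdot]$ with $\mathrm{right}(T)=\mathrm{right}(S)$, and dually for directed $S\subseteq[\cdot,q]$, $\mathrm{right}(\bigsqcup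 S)=q$ and $\mathrm{left}(\bigsqcup S)=\mathrm{left}(\bigsqcup T)$ for every directed $T\subseteq[\cdot,p]$ with $\mathrm{left}(T)=\mathrm{left}(S)$; (iv) each $\{y\in\max(D):x\sqsubseteq y\}$ is Scott compact. $\underline{\mathrm{IN}}$ is the category of interval domains with arrows the Scott continuous maps $f:D\to E$ satisfying $f\circ\mathrm{left}_D=\mathrm{left}_E\circ f$ and $f\circ\mathrm{right}_D=\mathrm{right}_E\circ f$. Two categories are equivalent if there are functors in both directions whose composites are naturally isomorphic to the identity functors. *)

From Stdlib Require Import List.
Set Implicit Arguments.
Unset Strict Implicit.

Section Order.
Variable T : Type.
Variable le : T -> T -> Prop.

Definition is_partial_order : Prop :=
  (forall x, le x x) /\ (forall x y, le x y -> le y x -> x = y) /\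
  (forall x y z, le x y -> le y z -> le x z).

Definition directed (S : T -> Prop) : Prop :=
  (exists x, S x) /\ forall x y, S x -> S y -> exists z, S z /\ le x z /\ le y z.

Definition filtered (S : T -> Prop) : Prop :=
  (exists x, S x) /\ forall x y, S x -> S y -> exists z, S z /\ le z x /\ le z y.

Definition is_sup (S : T -> Prop) (s : T) : Prop :=
  (forall x, S x -> le x s) /\ forall u, (forall x, S x -> le x u) -> le s u.

Definition is_inf (S : T -> Prop) (i : T) : Prop :=
  (forall x, S x -> le i x) /\ forall u, (forall x, S x -> le u x) -> le u i.

Definition is_meet (a b m : T) : Prop :=
  le m a /\ le m b /\ forall u, le u a -> le u b -> le u m.

Definition way_below (x y : T) : Prop :=
  forall (S : T -> Prop) (s : T), directed S -> is_sup S s -> le y s ->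
    exists a, S a /\ le x a.

Definition wb_up (x : T) : T -> Prop := fun a => way_below x a.

Definition continuous_poset : Prop :=
  exists B : T -> Prop, forall x, exists S : T -> Prop,
    (forall a, S a -> B a /\ way_below a x) /\ directed S /\ is_sup S x.

Definition dcpo : Prop := forall S, directed S -> exists s, is_sup S s.

Definition continuous_dcpo : Prop := continuous_poset /\ dcpo.

Definition maximal (x : T) : Prop := forall y, le x y -> y = x.

Definition upper_set (U : T -> Prop) : Prop := forall x y, U x -> le x y -> U y.

Definition scott_open (U : T -> Prop) : Prop :=
  upper_set U /\
  forall S s, directed S -> is_sup S s -> U s -> exists a, S a /\ U a.

Definition bicontinuous : Prop :=
  continuous_poset /\
  (forall x y, way_below x y <->
     (forall (S : T -> Prop) (i : T), filtered S -> is_inf S i -> le i x ->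
        exists s, S s /\ le s y)) /\
  (forall x, filtered (wb_up x) /\ is_inf (wb_up x) x).

(* open sets of the interval topology: unions of basic sets {z : a ≪ z ≪ b} *)
Definition interval_open (U : T -> Prop) : Prop :=
  forall z, U z -> exists a b, way_below a z /\ way_below z b /\
    forall w, way_below a w -> way_below w b -> U w.

Definition compact_wrt (open : (T -> Prop) -> Prop) (K : T -> Prop) : Prop :=
  forall (I : Type) (U : I -> T -> Prop),
    (forall i, open (U i)) -> (forall x, K x -> exists i, U i x) ->
    exists l : list I, forall x, K x -> exists i, In i l /\ U i x.

Definition closed_interval (a b : T) : T -> Prop := fun z => le a z /\ le z b.

Definition globally_hyperbolic : Prop :=
  bicontinuous /\ forall a b, compact_wrt interval_open (closed_interval a b).

Definition is_sup_in (P S : T -> Prop) (s : T) : Prop :=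
  (forall x, S x -> le x s) /\ forall u, P u -> (forall x, S x -> le x u) -> le s u.

Definition way_below_in (P : T -> Prop) (x y : T) : Prop :=
  forall (S : T -> Prop) (s : T), (forall a, S a -> P a) -> directed S ->
    P s -> is_sup_in P S s -> le y s -> exists a, S a /\ le x a.

End Order.

Definition continuous_map (X Y : Type) (openX : (X -> Prop) -> Prop)
  (openY : (Y -> Prop) -> Prop) (f : X -> Y) : Prop :=
  forall V, openY V -> openX (fun x => V (f x)).

Section Interval.
Variable D : Type.
Variable le : D -> D -> Prop.
Variables left right : D -> D.

Record interval_poset_axioms : Prop := {
  ip_left_max : forall x, maximal le (left x);
  ip_right_max : forall x, maximal le (right x);
  ip_meet : forall x, is_meet le (left x) (right x) x;
  ip_concat : forall x y, right x = left y ->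
     exists m, is_meet le x y m /\ left m = left x /\ right m = right y;
  ip_split : forall x p, maximal le p -> le x p ->
     (exists m, is_meet le (left x) p m /\ left m = left x /\ right m = p) /\
     (exists m, is_meet le p (right x) m /\ left m = p /\ right m = right x)
}.

Definition left_fiber (p : D) : D -> Prop := fun z => left z = p.
Definition right_fiber (q : D) : D -> Prop := fun z => right z = q.

Record interval_domain_axioms : Prop := {
  idom_i : forall x p, maximal le p -> way_below le x p ->
     (forall m, is_meet le (left x) p m -> exists a, way_below le m a) /\
     (forall m, is_meet le p (right x) m -> exists a, way_below le m a);
  idom_ii : forall x,
     ((exists a, way_below le x a) <->
        (forall y, left y = left x -> le y x ->
           way_below_in le (right_fiber (right y)) y (right y))) /\
     ((exists a, way_below le x a) <->
        (forall y, right y = right x -> le y x ->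
           way_below_in le (left_fiber (left y)) y (left y)));
  idom_iii_left : forall p (S : D -> Prop) s,
     directed le S -> (forall a, S a -> left a = p) -> is_sup le S s ->
     left s = p /\
     forall q (T : D -> Prop) t,
       directed le T -> (forall a, T a -> left a = q) -> is_sup le T t ->
       (forall z, (exists a, T a /\ right a = z) <-> (exists a, S a /\ right a = z)) ->
       right s = right t;
  idom_iii_right : forall q (S : D -> Prop) s,
     directed le S -> (forall a, S a -> right a = q) -> is_sup le S s ->
     right s = q /\
     forall p (T : D -> Prop) t,
       directed le T -> (forall a, T a -> right a = p) -> is_sup le T t ->
       (forall z, (exists a, T a /\ left a = z) <-> (exists a, S a /\ left a = z)) ->
       left s = left t;
  idom_iv : forall x,
     compact_wrt (scott_open le) (fun y => maximal le y /\ le x y)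
}.

End Interval.

Record Category := {
  Ob : Type;
  Hom : Ob -> Ob -> Type;
  hom_eq : forall X Y, Hom X Y -> Hom X Y -> Prop;
  idm : forall X, Hom X X;
  comp : forall X Y Z, Hom Y Z -> Hom X Y -> Hom X Z
}.
Arguments Hom c _ _ : clear implicits.
Arguments hom_eq {c _ _} _ _.
Arguments idm c _ : clear implicits.
Arguments comp {c _ _ _} _ _.

Record Functor (C D : Category) := {
  fobj : Ob C -> Ob D;
  fmap : forall X Y, Hom C X Y -> Hom D (fobj X) (fobj Y);
  fmap_resp : forall X Y (f g : Hom C X Y),
     hom_eq f g -> hom_eq (fmap f) (fmap g);
  fmap_id : forall X, hom_eq (fmap (idm C X)) (idm D (fobj X));
  fmap_comp : forall X Y Z (g : Hom C Y Z) (f : Hom C X Y),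
     hom_eq (fmap (comp g f)) (comp (fmap g) (fmap f))
}.
Arguments fobj {C D} _ _.
Arguments fmap {C D} _ {X Y} _.

Definition iso_to_identity (C : Category) (FO : Ob C -> Ob C)
  (FM : forall X Y, Hom C X Y -> Hom C (FO X) (FO Y)) : Prop :=
  exists (a : forall X, Hom C (FO X) X) (b : forall X, Hom C X (FO X)),
    (forall X, hom_eq (comp (a X) (b X)) (idm C X)) /\
    (forall X, hom_eq (comp (b X) (a X)) (idm C (FO X))) /\
    (forall X Y (f : Hom C X Y),
        hom_eq (comp (a Y) (FM X Y f)) (comp f (a X))).

Definition equivalent (C D : Category) : Prop :=
  exists (F : Functor C D) (G : Functor D C),
    @iso_to_identity C (fun X => fobj G (fobj F X))
                    (fun X Y f => fmap G (fmap F f)) /\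
    @iso_to_identity D (fun Y => fobj F (fobj G Y))
                    (fun X Y f => fmap F (fmap G f)).

Record GHPoset := {
  gh_car :> Type;
  gh_le : gh_car -> gh_car -> Prop;
  gh_po : is_partial_order gh_le;
  gh_gh : globally_hyperbolic gh_le
}.

Record GMor (X Y : GHPoset) := {
  gm_fun :> X -> Y;
  gm_mono : forall x y, gh_le x y -> gh_le (gm_fun x) (gm_fun y);
  gm_cont : continuous_map (interval_open (@gh_le X))
                           (interval_open (@gh_le Y)) gm_fun
}.

Definition GMor_id (X : GHPoset) : GMor X X.
Proof.
  refine {| gm_fun := fun x => x |}; [ now auto | now intros V HV ].
Defined.

Definition GMor_comp (X Y Z : GHPoset) (g : GMor Y Z) (f : GMor X Y) : GMor X Z.
Proof.
  refine {| gm_fun := fun x => g (f x) |}.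
  - intros x y H; apply (gm_mono g), (gm_mono f), H.
  - intros V HV. apply (@gm_cont _ _ f (fun y => V (g y))). apply (@gm_cont _ _ g), HV.
Defined.

Definition G_cat : Category :=
  {| Ob := GHPoset; Hom := GMor;
     hom_eq := fun X Y (f g : GMor X Y) => forall x, f x = g x;
     idm := GMor_id; comp := GMor_comp |}.

Record IntervalDomain := {
  in_car :> Type;
  in_le : in_car -> in_car -> Prop;
  in_po : is_partial_order in_le;
  in_left : in_car -> in_car;
  in_right : in_car -> in_car;
  in_ip : interval_poset_axioms in_le in_left in_right;
  in_cdcpo : continuous_dcpo in_le;
  in_ax : interval_domain_axioms in_le in_left in_right
}.

Record INMor (D E : IntervalDomain) := {
  im_fun :> D -> E;
  im_scott : continuous_map (scott_open (@in_le D)) (scott_open (@in_le E)) im_fun;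
  im_left : forall x, im_fun (in_left x) = in_left (im_fun x);
  im_right : forall x, im_fun (in_right x) = in_right (im_fun x)
}.

Definition INMor_id (D : IntervalDomain) : INMor D D.
Proof.
  refine {| im_fun := fun x => x |}; [ now intros V HV | reflexivity | reflexivity ].
Defined.

Definition INMor_comp (D E F : IntervalDomain) (g : INMor E F) (f : INMor D E) : INMor D F.
Proof.
  refine {| im_fun := fun x => g (f x) |}.
  - intros V HV. apply (@im_scott _ _ f (fun y => V (g y))). apply (@im_scott _ _ g), HV.
  - intros x. now rewrite (im_left f), (im_left g).
  - intros x. now rewrite (im_right f), (im_right g).
Defined.

Definition IN_cat : Category :=
  {| Ob := IntervalDomain; Hom := INMor;
     hom_eq := fun D E (f g : INMor D E) => forall x, f x = g x;
     idm := INMor_id; comp := INMor_comp |}.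

(* A globally hyperbolic poset X yields the interval domain IX of its closed intervals
   [a, b] under reverse inclusion, with left [a, b] = [a, a] and right [a, b] = [b, b].
   Compactness of closed intervals makes bounded directed sets have suprema, so IX is a
   dcpo whose suprema are computed endwise, and [a, b] << [c, d] iff a << c and d << b;
   the interval domain axioms then reduce to bicontinuity of X.  Conversely the maximal
   elements of an interval domain D, ordered by a <= b iff a = left z and b = right z
   for some z, form a globally hyperbolic poset: z is determined by its two ends, axiom
   (iii) turns directed suprema in D into suprema of left ends, axioms (i) and (ii)
   identify the way-below relation, and axiom (iv) gives compactness.  The unit maps
   x |-> [x, x] and z |-> [left z, right z] are order isomorphisms compatible with all
   the structure, hence natural isomorphisms. *)

From Stdlib Require Import List Classical ProofIrrelevance FunctionalExtensionality
  PropExtensionality IndefiniteDescription Relation_Operators.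
Set Implicit Arguments.
Unset Strict Implicit.

Definition image (A B : Type) (f : A -> B) (S : A -> Prop) : B -> Prop :=
  fun y => exists x, S x /\ f x = y.

Lemma directed_image (A B : Type) (leA : A -> A -> Prop) (leB : B -> B -> Prop)
  (f : A -> B) (S : A -> Prop) :
  (forall x y, leA x y -> leB (f x) (f y)) -> directed leA S -> directed leB (image f S).
Proof.
  intros mono [[x0 Sx0] dirS]. split; [exists (f x0), x0; auto|].
  intros _ _ [x [Sx <-]] [y [Sy <-]].
  destruct (dirS x y Sx Sy) as [z [Sz [Hxz Hyz]]].
  exists (f z); split; [exists z; auto|split; apply mono; assumption].
Qed.

Lemma is_sup_ext (T : Type) (le : T -> T -> Prop) (S S' : T -> Prop) s :
  (forall x, S x <-> S' x) -> is_sup le S s -> is_sup le S' s.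
Proof.
  intros E [ub least]. split.
  - intros x Hx. apply ub, E, Hx.
  - intros u Hu. apply least. intros x Hx. apply Hu, E, Hx.
Qed.

(** * Posets and the way-below relation *)

Section PosetFacts.
Variables (T : Type) (le : T -> T -> Prop).
Hypothesis po : is_partial_order le.

Lemma le_refl x : le x x. Proof. apply po. Qed.
Lemma le_antisym x y : le x y -> le y x -> x = y. Proof. apply po. Qed.
Lemma le_trans x y z : le x y -> le y z -> le x z. Proof. apply po. Qed.

Lemma transp_partial_order : is_partial_order (transp T le).
Proof.
  unfold transp; split; [exact le_refl|split].
  - intros x y H1 H2; apply le_antisym; assumption.
  - intros x y z H1 H2; apply le_trans with y; assumption.
Qed.

Lemma sup_unique S a b : is_sup le S a -> is_sup le S b -> a = b.
Proof. intros [H1 H2] [H3 H4]. apply le_antisym; auto. Qed.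

Lemma inf_unique S a b : is_inf le S a -> is_inf le S b -> a = b.
Proof. intros [H1 H2] [H3 H4]. apply le_antisym; auto. Qed.

Lemma is_sup_singleton x : is_sup le (fun a => a = x) x.
Proof. split; [intros a ->; apply le_refl|intros u Hu; apply Hu; reflexivity]. Qed.

Lemma directed_singleton x : directed le (fun a => a = x).
Proof. split; [exists x; reflexivity|intros a b -> ->; exists x; auto using le_refl]. Qed.

Lemma is_sup_image_constant (A : Type) (S : A -> Prop) (f : A -> T) a0 :
  S a0 -> (forall a, S a -> f a = f a0) -> is_sup le (image f S) (f a0).
Proof.
  intros Sa0 Hf. split.
  - intros _ [a [Sa <-]]. rewrite (Hf a Sa). apply le_refl.
  - intros u Hu. apply Hu. exists a0; auto.
Qed.

Lemma way_below_le x y : way_below le x y -> le x y.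
Proof.
  intro H. destruct (H _ y (directed_singleton y) (is_sup_singleton y) (le_refl y))
    as [a [-> Ha]].
  exact Ha.
Qed.

Lemma way_below_mono x' x y y' :
  le x' x -> way_below le x y -> le y y' -> way_below le x' y'.
Proof.
  intros H1 H2 H3 S s Hd Hs Hy. destruct (H2 S s Hd Hs) as [a [Sa Ha]].
  - apply le_trans with y'; assumption.
  - exists a; split; [exact Sa|apply le_trans with x; assumption].
Qed.

Lemma way_below_le_trans x y z : way_below le x y -> le y z -> way_below le x z.
Proof. intros; eapply way_below_mono; eauto using le_refl. Qed.

Lemma le_way_below_trans x y z : le x y -> way_below le y z -> way_below le x z.
Proof. intros; eapply way_below_mono; eauto using le_refl. Qed.

Definition wb_down x : T -> Prop := fun a => way_below le a x.

Definition approximating : Prop :=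
  forall x, directed le (wb_down x) /\ is_sup le (wb_down x) x.

Lemma wb_down_directed_sup x :
  (exists S, (forall a, S a -> way_below le a x) /\ directed le S /\ is_sup le S x) ->
  directed le (wb_down x) /\ is_sup le (wb_down x) x.
Proof.
  intros [S [HS [HdS HsS]]].
  pose proof HdS as [[s0 Hs0] dirS]. pose proof HsS as [_ leastS].
  split; [split|split].
  - exists s0; apply HS; assumption.
  - intros a b Ha Hb.
    destruct (Ha S x HdS HsS (le_refl x)) as [s1 [S1 L1]].
    destruct (Hb S x HdS HsS (le_refl x)) as [s2 [S2 L2]].
    destruct (dirS s1 s2 S1 S2) as [s3 [S3 [L3 L4]]].
    exists s3; split; [apply HS; assumption|split; eapply le_trans; eauto].
  - intros a Ha; apply way_below_le, Ha.
  - intros u Hu. apply leastS. intros a Sa. apply Hu, HS, Sa.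
Qed.

Lemma continuous_poset_approximating : continuous_poset le -> approximating.
Proof.
  intros [B HB] x. apply wb_down_directed_sup.
  destruct (HB x) as [S [H1 H2]]. exists S; split; [intros a Sa; apply H1, Sa|exact H2].
Qed.

(* The interpolating set {e' | e' << e << z} is directed with supremum z. *)
Lemma way_below_interpolate :
  approximating -> forall x z, way_below le x z -> exists y, way_below le x y /\ way_below le y z.
Proof.
  intros C x z Hxz.
  set (E := fun e' => exists e, way_below le e z /\ way_below le e' e).
  assert (HE : directed le E).
  { split.
    - destruct (C z) as [[[e He] _] _]. destruct (C e) as [[[e' He'] _] _].
      exists e', e; auto.
    - intros a b [e1 [E1 A1]] [e2 [E2 A2]].
      destruct (C z) as [[_ dirz] _]. destruct (dirz e1 e2 E1 E2) as [e3 [E3 [L1 L2]]].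
      destruct (C e3) as [[_ dire3] _].
      destruct (dire3 a b (way_below_le_trans A1 L1) (way_below_le_trans A2 L2))
        as [c [Hc [L3 L4]]].
      exists c; split; [exists e3; auto|auto]. }
  assert (HsE : is_sup le E z).
  { split.
    - intros a [e [E1 E2]]. apply le_trans with e; apply way_below_le; assumption.
    - intros u Hu. apply (proj2 (proj2 (C z))). intros e He.
      apply (proj2 (proj2 (C e))). intros a Ha. apply Hu. exists e; auto. }
  destruct (Hxz E z HE HsE (le_refl z)) as [e' [[e [He1 He2]] Hle]].
  exists e; split; [exact (le_way_below_trans Hle He2)|exact He1].
Qed.

End PosetFacts.

(** * Globally hyperbolic posets *)

Lemma interval_open_guard (T : Type) (le : T -> T -> Prop) (Q : Prop) (U : T -> Prop) :
  interval_open le U -> interval_open le (fun z => Q /\ U z).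
Proof.
  intros HU z [HQ Hz]. destruct (HU z Hz) as [a [b [Ha [Hb Hab]]]].
  exists a, b; split; [exact Ha|split; [exact Hb|]]. intros w Hw1 Hw2; split; auto.
Qed.

Lemma directed_finite_upper_bound (T : Type) (le : T -> T -> Prop) (A : T -> Prop) a0 :
  is_partial_order le -> directed le A -> A a0 -> forall l : list T,
  exists k, A k /\ le a0 k /\ forall a, In a l -> A a -> le a k.
Proof.
  intros po [_ dirA] Aa0. induction l as [|a l IH].
  - exists a0; split; [exact Aa0|split; [apply le_refl, po|intros a []]].
  - destruct IH as [k [Ak [Hk0 Hk]]]. destruct (classic (A a)) as [Aa|nAa].
    + destruct (dirA a k Aa Ak) as [k' [Ak' [L1 L2]]].
      exists k'; split; [exact Ak'|split; [eapply le_trans; eauto|]].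
      intros a' [<-|Ha'] Aa'; [exact L1|eapply le_trans; eauto].
    + exists k; split; [exact Ak|split; [exact Hk0|]].
      intros a' [<-|Ha'] Aa'; [contradiction|auto].
Qed.

Section GloballyHyperbolic.
Variables (T : Type) (le : T -> T -> Prop).
Hypothesis po : is_partial_order le.
Hypothesis gh : globally_hyperbolic le.

Lemma gh_approximating : approximating le.
Proof. apply (continuous_poset_approximating po), gh. Qed.

Lemma gh_wb_up x : filtered le (wb_up le x) /\ is_inf le (wb_up le x) x.
Proof. apply gh. Qed.

Lemma gh_way_below_iff x y : way_below le x y <->
  (forall S i, filtered le S -> is_inf le S i -> le i x -> exists s, S s /\ le s y).
Proof. apply gh. Qed.

Lemma way_below_exists z : exists c, way_below le c z.
Proof. destruct (gh_approximating z) as [[[c Hc] _] _]. exists c; exact Hc. Qed.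

Lemma way_above_exists z : exists c, way_below le z c.
Proof. destruct (gh_wb_up z) as [[[c Hc] _] _]. exists c; exact Hc. Qed.

Lemma interval_open_not_above a : interval_open le (fun z => ~ le a z).
Proof.
  intros z Hz. destruct (way_below_exists z) as [c Hc].
  assert (exists d, way_below le z d /\ ~ le a d) as [d [Hd1 Hd2]].
  { apply NNPP; intro N. apply Hz. apply (proj2 (proj2 (gh_wb_up z))).
    intros d Hd. apply NNPP; intro N2. apply N; exists d; auto. }
  exists c, d; split; [exact Hc|split; [exact Hd1|]].
  intros w _ Hw Haw. apply Hd2. apply (le_trans po) with w; [|apply (way_below_le po)]; auto.
Qed.

Lemma interval_open_not_below u : interval_open le (fun z => ~ le z u).
Proof.
  intros z Hz. destruct (way_above_exists z) as [d Hd].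
  assert (exists c, way_below le c z /\ ~ le c u) as [c [Hc1 Hc2]].
  { apply NNPP; intro N. apply Hz. apply (proj2 (proj2 (gh_approximating z))).
    intros c Hc. apply NNPP; intro N2. apply N; exists c; auto. }
  exists c, d; split; [exact Hc1|split; [exact Hd|]].
  intros w Hw _ Hwu. apply Hc2. apply (le_trans po) with w; [apply (way_below_le po)|]; auto.
Qed.

(* The sets {z | ~ a <= z} (a in A) and {z | ~ z <= u} (u an upper bound of A) are
   interval open; a point of [a0, b] lying in none of them is a supremum of A, so
   they cover [a0, b], and a finite subcover is refuted by an upper bound in A of
   the finitely many a involved. *)
Lemma gh_directed_sup A b :
  directed le A -> (forall a, A a -> le a b) -> exists c, is_sup le A c.
Proof.
  intros HA Hb. pose proof HA as [[a0 Aa0] _]. apply NNPP; intro Nsup.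
  set (U := fun (i : T + T) z => match i with
              | inl a => A a /\ ~ le a z
              | inr u => (forall a, A a -> le a u) /\ ~ le z u end).
  destruct (proj2 gh a0 b (T + T)%type U) as [l Hl].
  - intros [a|u]; apply interval_open_guard;
      [apply interval_open_not_above|apply interval_open_not_below].
  - intros z _. apply NNPP; intro N. apply Nsup. exists z. split.
    + intros a Aa. apply NNPP; intro N2. apply N. exists (inl a); simpl; auto.
    + intros u Hu. apply NNPP; intro N2. apply N. exists (inr u); simpl; auto.
  - set (l' := map (fun i => match i with inl a => a | inr _ => a0 end) l).
    destruct (directed_finite_upper_bound po HA Aa0 l') as [k [Ak [Hk0 Hk]]].
    destruct (Hl k (conj Hk0 (Hb k Ak))) as [[a|u] [Hin [H1 H2]]].
    + apply H2, Hk; [apply in_map_iff; exists (inl a); auto|exact H1].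
    + apply H2, H1, Ak.
Qed.

Lemma way_below_transp x y : way_below (transp T le) x y <-> way_below le y x.
Proof. symmetry; apply gh_way_below_iff. Qed.

Lemma interval_open_transp U : interval_open (transp T le) U <-> interval_open le U.
Proof.
  split; intros H z Hz; destruct (H z Hz) as [a [b [H1 [H2 H3]]]]; exists b, a;
    rewrite ?way_below_transp in *; split; auto; split; auto;
    intros w W1 W2; apply H3; rewrite ?way_below_transp in *; auto.
Qed.

Lemma gh_transp : globally_hyperbolic (transp T le).
Proof.
  assert (E : forall x, wb_up (transp T le) x = wb_down le x).
  { intros x. apply functional_extensionality; intro a.
    apply propositional_extensionality, way_below_transp. }
  split; [split; [|split]|].
  - exists (fun _ => True). intros x. exists (wb_up le x).
    split; [|exact (gh_wb_up x)].
    intros a Ha; split; [exact I|apply way_below_transp, Ha].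
  - intros x y. rewrite way_below_transp. reflexivity.
  - intros x. rewrite E. exact (gh_approximating x).
  - intros a b I U HU Hc.
    destruct (proj2 gh b a I U) as [l Hl].
    + intros i; apply interval_open_transp, HU.
    + intros x [H1 H2]. apply Hc. split; assumption.
    + exists l. intros x [H1 H2]. apply Hl. split; assumption.
Qed.

End GloballyHyperbolic.

Lemma gh_filtered_inf (T : Type) (le : T -> T -> Prop) A b :
  is_partial_order le -> globally_hyperbolic le ->
  filtered le A -> (forall a, A a -> le b a) -> exists c, is_inf le A c.
Proof.
  intros po gh. exact (gh_directed_sup (transp_partial_order po) (gh_transp po gh) (b := b)).
Qed.

Section IntervalContinuousMaps.
Variables (X Y : Type) (leX : X -> X -> Prop) (leY : Y -> Y -> Prop).
Hypotheses (poX : is_partial_order leX) (poY : is_partial_order leY).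
Hypotheses (ghX : globally_hyperbolic leX) (ghY : globally_hyperbolic leY).
Variable f : X -> Y.
Hypothesis f_mono : forall x y, leX x y -> leY (f x) (f y).
Hypothesis f_cont : continuous_map (interval_open leX) (interval_open leY) f.

(* If f c were not below the supremum t of f(L), some basic neighbourhood e << c << g
   would map into {z | ~ z <= t}; interpolating e << e' << c puts a member of L there. *)
Lemma gh_map_preserves_sup L c :
  directed leX L -> is_sup leX L c -> is_sup leY (image f L) (f c).
Proof.
  intros HL Hc.
  assert (HfL : directed leY (image f L)) by exact (directed_image f_mono HL).
  assert (Hb : forall y, image f L y -> leY y (f c)).
  { intros _ [x [Lx <-]]. apply f_mono, Hc, Lx. }
  destruct (gh_directed_sup poY ghY HfL Hb) as [t Ht].
  assert (Hct : leY (f c) t).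
  { apply NNPP; intro N.
    destruct (f_cont (interval_open_not_below poY ghY (u := t)) N) as [e [g [He [Hg Hn]]]].
    destruct (way_below_interpolate poX (gh_approximating poX ghX) He) as [e' [He1 He2]].
    destruct (He2 L c HL Hc (le_refl poX c)) as [l [Ll Hl]].
    apply (Hn l).
    - exact (way_below_le_trans poX He1 Hl).
    - exact (le_way_below_trans poX (proj1 Hc l Ll) Hg).
    - apply Ht. exists l; auto. }
  split; [exact Hb|].
  intros u Hu. apply (le_trans poY) with t; [exact Hct|apply Ht, Hu].
Qed.

End IntervalContinuousMaps.

Lemma gh_map_preserves_inf (X Y : Type) (leX : X -> X -> Prop) (leY : Y -> Y -> Prop)
  (poX : is_partial_order leX) (poY : is_partial_order leY)
  (ghX : globally_hyperbolic leX) (ghY : globally_hyperbolic leY) (f : X -> Y)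
  (f_mono : forall x y, leX x y -> leY (f x) (f y))
  (f_cont : continuous_map (interval_open leX) (interval_open leY) f) R d :
  filtered leX R -> is_inf leX R d -> is_inf leY (image f R) (f d).
Proof.
  apply (gh_map_preserves_sup (transp_partial_order poX) (transp_partial_order poY)
           (gh_transp poX ghX) (gh_transp poY ghY)).
  - intros x y H; apply f_mono, H.
  - intros V HV. apply (interval_open_transp ghX), f_cont, (interval_open_transp ghY), HV.
Qed.

(** * The interval domain of a globally hyperbolic poset *)

Lemma image_iff_of_injective (A B C : Type) (f : A -> B) (g : B -> C) (S S' : A -> Prop) :
  (forall x y, g x = g y -> x = y) ->
  (forall c, image (fun a => g (f a)) S c <-> image (fun a => g (f a)) S' c) ->
  forall b, image f S b <-> image f S' b.
Proof.
  intros g_inj H b; split; intros [a [Sa <-]].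
  - destruct (proj1 (H (g (f a))) (ex_intro _ a (conj Sa eq_refl))) as [a' [Sa' E]].
    exists a'; split; [exact Sa'|apply g_inj, E].
  - destruct (proj2 (H (g (f a))) (ex_intro _ a (conj Sa eq_refl))) as [a' [Sa' E]].
    exists a'; split; [exact Sa'|apply g_inj, E].
Qed.

Section IntervalDomainOfPoset.
Variables (T : Type) (le : T -> T -> Prop).
Hypothesis po : is_partial_order le.

Record interval := mkI { lo : T; hi : T; lo_le_hi : le lo hi }.

Definition interval_le (p q : interval) : Prop := le (lo p) (lo q) /\ le (hi q) (hi p).

Definition point_interval x : interval := mkI (le_refl po x).
Definition ileft p : interval := point_interval (lo p).
Definition iright p : interval := point_interval (hi p).

Lemma interval_eq p q : lo p = lo q -> hi p = hi q -> p = q.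
Proof.
  destruct p as [a b h], q as [a' b' h']; simpl; intros <- <-.
  f_equal; apply proof_irrelevance.
Qed.

Lemma point_interval_inj x y : point_interval x = point_interval y -> x = y.
Proof. exact (f_equal lo (x := point_interval x) (y := point_interval y)). Qed.

Lemma interval_le_partial_order : is_partial_order interval_le.
Proof.
  unfold interval_le; split; [|split].
  - intros x; split; apply le_refl, po.
  - intros x y [H1 H2] [H3 H4]; apply interval_eq; apply (le_antisym po); assumption.
  - intros x y z [H1 H2] [H3 H4]; split; eapply (le_trans po); eauto.
Qed.

Lemma interval_le_refl p : interval_le p p.
Proof. apply le_refl, interval_le_partial_order. Qed.

Lemma interval_maximal_iff p : maximal interval_le p <-> lo p = hi p.
Proof.
  split.
  - intros Hp. rewrite <- (Hp (ileft p)); [reflexivity|].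
    split; [apply le_refl, po|apply lo_le_hi].
  - intros E q [H1 H2]. apply interval_eq.
    + apply (le_antisym po); [|exact H1].
      rewrite E. eapply (le_trans po); [apply lo_le_hi|exact H2].
    + apply (le_antisym po); [exact H2|].
      rewrite <- E. eapply (le_trans po); [exact H1|apply lo_le_hi].
Qed.

Lemma interval_meet p q m : lo m = lo p -> hi m = hi q ->
  le (hi p) (hi q) -> le (lo p) (lo q) -> is_meet interval_le p q m.
Proof.
  intros Elo Ehi Hhi Hlo. unfold is_meet, interval_le; rewrite Elo, Ehi.
  split; [split; [apply le_refl, po|exact Hhi]|].
  split; [split; [exact Hlo|apply le_refl, po]|].
  intros u [H1 _] [_ H2]; split; assumption.
Qed.

Lemma interval_interval_poset : interval_poset_axioms interval_le ileft iright.
Proof.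
  constructor.
  - intros x. apply interval_maximal_iff; reflexivity.
  - intros x. apply interval_maximal_iff; reflexivity.
  - intros x. apply interval_meet; simpl; auto using lo_le_hi.
  - intros x y E. apply point_interval_inj in E.
    assert (h : le (lo x) (hi y)).
    { eapply (le_trans po); [apply lo_le_hi|]. rewrite E. apply lo_le_hi. }
    exists (mkI h); split; [|split; reflexivity].
    apply interval_meet; simpl; [reflexivity|reflexivity| |].
    + rewrite E; apply lo_le_hi.
    + rewrite <- E; apply lo_le_hi.
  - intros x p Hp [Hlo Hhi]. apply interval_maximal_iff in Hp. split.
    + exists (mkI Hlo); split; [|split; [reflexivity|apply interval_eq; auto]].
      apply interval_meet; simpl; [reflexivity|exact Hp|rewrite <- Hp|]; assumption.
    + exists (mkI Hhi); split; [|split; [apply interval_eq; auto|reflexivity]].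
      apply interval_meet; simpl; [symmetry; exact Hp|reflexivity| |rewrite Hp]; assumption.
Qed.

Lemma directed_lows S : directed interval_le S -> directed le (image lo S).
Proof. apply directed_image. intros p q H; apply H. Qed.

Lemma filtered_highs S : directed interval_le S -> filtered le (image hi S).
Proof. apply (directed_image (leB := transp T le)). intros p q H; apply H. Qed.

Lemma low_le_high S : directed interval_le S ->
  forall a b, image lo S a -> image hi S b -> le a b.
Proof.
  intros [_ dirS] a b [z1 [S1 <-]] [z2 [S2 <-]].
  destruct (dirS z1 z2 S1 S2) as [z3 [S3 [[L1 _] [_ L2]]]].
  eapply (le_trans po); [exact L1|]. eapply (le_trans po); [apply lo_le_hi|exact L2].
Qed.

Hypothesis gh : globally_hyperbolic le.

Lemma interval_sup_exists S : directed interval_le S ->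
  exists s, is_sup interval_le S s /\
    is_sup le (image lo S) (lo s) /\ is_inf le (image hi S) (hi s).
Proof.
  intros HS. pose proof HS as [[z0 Sz0] _].
  assert (Hlh := low_le_high HS).
  destruct (gh_directed_sup po gh (directed_lows HS) (b := hi z0)) as [c Hc].
  { intros a Ha. apply Hlh; [exact Ha|exists z0; auto]. }
  destruct (gh_filtered_inf po gh (filtered_highs HS) (b := lo z0)) as [d Hd].
  { intros a Ha. apply Hlh; [exists z0; auto|exact Ha]. }
  assert (Hcd : le c d).
  { apply Hd. intros r Hr. apply Hc. intros a Ha. apply Hlh; assumption. }
  exists (mkI Hcd); split; [|split; assumption].
  split.
  - intros z Sz. split; simpl; [apply Hc|apply Hd]; exists z; auto.
  - intros u Hu. split; simpl.
    + apply Hc. intros _ [z [Sz <-]]. apply Hu, Sz.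
    + apply Hd. intros _ [z [Sz <-]]. apply Hu, Sz.
Qed.

Lemma interval_sup_ends S s : directed interval_le S -> is_sup interval_le S s ->
  is_sup le (image lo S) (lo s) /\ is_inf le (image hi S) (hi s).
Proof.
  intros HS Hs. destruct (interval_sup_exists HS) as [s' [Hs' Hends]].
  rewrite (sup_unique interval_le_partial_order Hs Hs'). exact Hends.
Qed.

Lemma le_of_way_below_around x a b :
  way_below le a (lo x) -> way_below le (hi x) b -> le a b.
Proof.
  intros Ha Hb. eapply (le_trans po); [apply (way_below_le po), Ha|].
  eapply (le_trans po); [apply lo_le_hi|apply (way_below_le po), Hb].
Qed.

Definition approximants x : interval -> Prop :=
  fun z => way_below le (lo z) (lo x) /\ way_below le (hi x) (hi z).

Lemma approximants_directed_sup x :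
  directed interval_le (approximants x) /\ is_sup interval_le (approximants x) x.
Proof.
  pose proof (gh_approximating po gh (lo x)) as [[[a0 Ha0] dir_lo] [_ sup_lo]].
  pose proof (gh_wb_up gh (hi x)) as [[[b0 Hb0] dir_hi] [_ inf_hi]].
  split; [split|split].
  - exists (mkI (le_of_way_below_around Ha0 Hb0)); split; assumption.
  - intros z1 z2 [A1 B1] [A2 B2].
    destruct (dir_lo _ _ A1 A2) as [a [Ha [L1 L2]]].
    destruct (dir_hi _ _ B1 B2) as [b [Hb [L3 L4]]].
    exists (mkI (le_of_way_below_around Ha Hb)); split; [split; assumption|].
    split; split; assumption.
  - intros z [H1 H2]; split; apply (way_below_le po); assumption.
  - intros u Hu. split.
    + apply sup_lo. intros a Ha.
      exact (proj1 (Hu (mkI (le_of_way_below_around Ha Hb0)) (conj Ha Hb0))).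
    + apply inf_hi. intros b Hb.
      exact (proj2 (Hu (mkI (le_of_way_below_around Ha0 Hb)) (conj Ha0 Hb))).
Qed.

Lemma interval_way_below_iff x y : way_below interval_le x y <->
  way_below le (lo x) (lo y) /\ way_below le (hi y) (hi x).
Proof.
  split.
  - intros H. destruct (approximants_directed_sup y) as [Hd Hs].
    destruct (H _ _ Hd Hs (interval_le_refl y)) as [z [[Z1 Z2] [L1 L2]]].
    split; [exact (le_way_below_trans po L1 Z1)|exact (way_below_le_trans po Z2 L2)].
  - intros [H1 H2] S s HS Hs [L1 L2].
    destruct (interval_sup_ends HS Hs) as [Hl Hr].
    destruct (H1 _ _ (directed_lows HS) Hl L1) as [_ [[z1 [S1 <-]] La]].
    destruct (proj1 (gh_way_below_iff gh (hi y) (hi x)) H2 _ _ (filtered_highs HS) Hr L2)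
      as [_ [[z2 [S2 <-]] Lb]].
    destruct HS as [_ dirS]. destruct (dirS z1 z2 S1 S2) as [z3 [S3 [[M1 _] [_ M2]]]].
    exists z3; split; [exact S3|split; eapply (le_trans po); eauto].
Qed.

Lemma interval_continuous_dcpo : continuous_dcpo interval_le.
Proof.
  split.
  - exists (fun _ => True). intros x. exists (approximants x).
    split; [|apply approximants_directed_sup].
    intros a Ha; split; [exact I|apply interval_way_below_iff, Ha].
  - intros S HS. destruct (interval_sup_exists HS) as [s [H _]]. exists s; exact H.
Qed.

Lemma interval_has_way_above_iff x :
  (exists a, way_below interval_le x a) <-> way_below le (lo x) (hi x).
Proof.
  split.
  - intros [a Ha]. apply interval_way_below_iff in Ha. destruct Ha as [H1 H2].
    eapply (way_below_le_trans po); [exact H1|].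
    eapply (le_trans po); [apply lo_le_hi|apply (way_below_le po), H2].
  - intros H. destruct (way_below_interpolate po (gh_approximating po gh) H) as [c [H1 H2]].
    exists (point_interval c). apply interval_way_below_iff; split; assumption.
Qed.

Lemma interval_axiom_i x p : maximal interval_le p -> way_below interval_le x p ->
  (forall m, is_meet interval_le (ileft x) p m -> exists a, way_below interval_le m a) /\
  (forall m, is_meet interval_le p (iright x) m -> exists a, way_below interval_le m a).
Proof.
  intros Hp Hxp. apply interval_maximal_iff in Hp.
  apply interval_way_below_iff in Hxp as [H1 H2].
  split; intros m [[M1 _] [[_ M2] _]]; apply interval_has_way_above_iff; simpl in *.
  - eapply (way_below_mono po); [exact M1|exact H1|].
    rewrite Hp. exact M2.
  - eapply (way_below_mono po); [|exact H2|exact M2].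
    rewrite <- Hp. exact M1.
Qed.

Lemma right_fiber_way_below x y :
  way_below le (lo x) (hi x) -> lo y = lo x -> interval_le y x ->
  way_below_in interval_le (right_fiber iright (iright y)) y (iright y).
Proof.
  intros Hx Ely [_ Hxy] S s HSf HS _ Hsup [Hys _]; simpl in Hys.
  assert (Hhi : forall z, S z -> hi z = hi y) by (intros z Sz; exact (f_equal hi (HSf z Sz))).
  assert (Hbound : forall a, image lo S a -> le a (hi y)).
  { intros _ [z [Sz <-]]. rewrite <- (Hhi z Sz). apply lo_le_hi. }
  destruct (gh_directed_sup po gh (directed_lows HS) Hbound) as [c Hc].
  assert (Hcy : le c (hi y)) by (apply Hc, Hbound).
  assert (Hsc : le (lo s) c).
  { apply (proj2 Hsup (mkI Hcy)); [reflexivity|].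
    intros z Sz; split; simpl; [apply Hc; exists z; auto|rewrite (Hhi z Sz); apply le_refl, po]. }
  assert (Hxc : way_below le (lo x) c).
  { apply (way_below_le_trans po Hx).
    apply (le_trans po) with (hi y); [exact Hxy|]. apply (le_trans po) with (lo s); assumption. }
  destruct (Hxc _ _ (directed_lows HS) Hc (le_refl po c)) as [_ [[z [Sz <-]] Hz]].
  exists z; split; [exact Sz|split; [rewrite Ely; exact Hz|rewrite (Hhi z Sz); apply le_refl, po]].
Qed.

Lemma way_below_of_right_fiber x :
  way_below_in interval_le (right_fiber iright (iright x)) x (iright x) ->
  way_below le (lo x) (hi x).
Proof.
  intros H. pose proof (gh_approximating po gh (hi x)) as [[[a0 Ha0] dir_b] [_ sup_b]].
  set (S := fun z => hi z = hi x /\ way_below le (lo z) (hi x)).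
  assert (HS : directed interval_le S).
  { split; [exists (mkI (way_below_le po Ha0)); split; auto|].
    intros z1 z2 [E1 A1] [E2 A2]. destruct (dir_b _ _ A1 A2) as [a [Ha [L1 L2]]].
    exists (mkI (way_below_le po Ha)); split; [split; auto|].
    split; split; simpl; auto; [rewrite E1|rewrite E2]; apply le_refl, po. }
  assert (Hsup : is_sup_in interval_le (right_fiber iright (iright x)) S (iright x)).
  { split.
    - intros z [Ez Hz]. split; simpl; [apply (way_below_le po), Hz|rewrite Ez; apply le_refl, po].
    - intros u Hu Hub. apply (f_equal hi) in Hu; simpl in Hu.
      split; simpl; [|rewrite Hu; apply le_refl, po].
      apply sup_b. intros a Ha.
      exact (proj1 (Hub (mkI (way_below_le po Ha)) (conj eq_refl Ha))). }
  destruct (H S (iright x)) as [z [[_ Hz] [Lz _]]]; try assumption.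
  - intros z [Ez _]. apply interval_eq; simpl; auto.
  - reflexivity.
  - apply interval_le_refl.
  - exact (le_way_below_trans po Lz Hz).
Qed.

Lemma left_fiber_way_below x y :
  way_below le (lo x) (hi x) -> hi y = hi x -> interval_le y x ->
  way_below_in interval_le (left_fiber ileft (ileft y)) y (ileft y).
Proof.
  intros Hx Ehy [Hyx _] S s HSf HS _ Hsup [_ Hsy]; simpl in Hsy.
  assert (Hlo : forall z, S z -> lo z = lo y) by (intros z Sz; exact (f_equal lo (HSf z Sz))).
  assert (Hbound : forall a, image hi S a -> le (lo y) a).
  { intros _ [z [Sz <-]]. rewrite <- (Hlo z Sz). apply lo_le_hi. }
  destruct (gh_filtered_inf po gh (filtered_highs HS) Hbound) as [d Hd].
  assert (Hyd : le (lo y) d) by (apply Hd, Hbound).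
  assert (Hds : le d (hi s)).
  { apply (proj2 Hsup (mkI Hyd)); [reflexivity|].
    intros z Sz; split; simpl; [rewrite (Hlo z Sz); apply le_refl, po|apply Hd; exists z; auto]. }
  assert (Hdx : le d (lo x)).
  { apply (le_trans po) with (hi s); [exact Hds|]. apply (le_trans po) with (lo y); assumption. }
  destruct (proj1 (gh_way_below_iff gh _ _) Hx _ _ (filtered_highs HS) Hd Hdx)
    as [_ [[z [Sz <-]] Hz]].
  exists z; split; [exact Sz|split; [rewrite (Hlo z Sz); apply le_refl, po|rewrite Ehy; exact Hz]].
Qed.

Lemma way_below_of_left_fiber x :
  way_below_in interval_le (left_fiber ileft (ileft x)) x (ileft x) ->
  way_below le (lo x) (hi x).
Proof.
  intros H. pose proof (gh_wb_up gh (lo x)) as [[[b0 Hb0] dir_a] [_ inf_a]].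
  set (S := fun z => lo z = lo x /\ way_below le (lo x) (hi z)).
  assert (HS : directed interval_le S).
  { split; [exists (mkI (way_below_le po Hb0)); split; auto|].
    intros z1 z2 [E1 A1] [E2 A2]. destruct (dir_a _ _ A1 A2) as [b [Hb [L1 L2]]].
    exists (mkI (way_below_le po Hb)); split; [split; auto|].
    split; split; simpl; auto; [rewrite E1|rewrite E2]; apply le_refl, po. }
  assert (Hsup : is_sup_in interval_le (left_fiber ileft (ileft x)) S (ileft x)).
  { split.
    - intros z [Ez Hz]. split; simpl; [rewrite Ez; apply le_refl, po|apply (way_below_le po), Hz].
    - intros u Hu Hub. apply (f_equal lo) in Hu; simpl in Hu.
      split; simpl; [rewrite Hu; apply le_refl, po|].
      apply inf_a. intros b Hb.
      exact (proj2 (Hub (mkI (way_below_le po Hb)) (conj eq_refl Hb))). }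
  destruct (H S (ileft x)) as [z [[_ Hz] [_ Lz]]]; try assumption.
  - intros z [Ez _]. apply interval_eq; simpl; auto.
  - reflexivity.
  - apply interval_le_refl.
  - exact (way_below_le_trans po Hz Lz).
Qed.

Lemma interval_axiom_ii x :
  ((exists a, way_below interval_le x a) <->
     (forall y, ileft y = ileft x -> interval_le y x ->
        way_below_in interval_le (right_fiber iright (iright y)) y (iright y))) /\
  ((exists a, way_below interval_le x a) <->
     (forall y, iright y = iright x -> interval_le y x ->
        way_below_in interval_le (left_fiber ileft (ileft y)) y (ileft y))).
Proof.
  rewrite interval_has_way_above_iff. split; split.
  - intros Hx y Ey. apply right_fiber_way_below; [exact Hx|exact (f_equal lo Ey)].
  - intros H. apply way_below_of_right_fiber, H; [reflexivity|apply interval_le_refl].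
  - intros Hx y Ey. apply left_fiber_way_below; [exact Hx|exact (f_equal hi Ey)].
  - intros H. apply way_below_of_left_fiber, H; [reflexivity|apply interval_le_refl].
Qed.

Lemma interval_axiom_iii_left p (S : interval -> Prop) s :
  directed interval_le S -> (forall a, S a -> ileft a = p) -> is_sup interval_le S s ->
  ileft s = p /\
  forall q (S' : interval -> Prop) s',
    directed interval_le S' -> (forall a, S' a -> ileft a = q) -> is_sup interval_le S' s' ->
    (forall z, (exists a, S' a /\ iright a = z) <-> (exists a, S a /\ iright a = z)) ->
    iright s = iright s'.
Proof.
  intros HS HSp Hs. destruct (interval_sup_ends HS Hs) as [Hl Hr]. split.
  - pose proof HS as [[z0 Sz0] _]. rewrite <- (HSp z0 Sz0).
    apply (f_equal point_interval), (sup_unique po Hl), (is_sup_image_constant po); [exact Sz0|].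
    intros z Sz. apply point_interval_inj. unfold ileft in HSp. rewrite !HSp; auto.
  - intros q S' s' HS' _ Hs' Hrights.
    destruct (interval_sup_ends HS' Hs') as [_ Hr'].
    apply (f_equal point_interval), (inf_unique po Hr).
    apply (is_sup_ext (le := transp T le) (S := image hi S')); [|exact Hr'].
    exact (image_iff_of_injective point_interval_inj Hrights).
Qed.

Lemma interval_axiom_iii_right q (S : interval -> Prop) s :
  directed interval_le S -> (forall a, S a -> iright a = q) -> is_sup interval_le S s ->
  iright s = q /\
  forall p (S' : interval -> Prop) s',
    directed interval_le S' -> (forall a, S' a -> iright a = p) -> is_sup interval_le S' s' ->
    (forall z, (exists a, S' a /\ ileft a = z) <-> (exists a, S a /\ ileft a = z)) ->
    ileft s = ileft s'.
Proof.
  intros HS HSq Hs. destruct (interval_sup_ends HS Hs) as [Hl Hr]. split.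
  - pose proof HS as [[z0 Sz0] _]. rewrite <- (HSq z0 Sz0).
    apply (f_equal point_interval),
      (inf_unique po Hr), (is_sup_image_constant (transp_partial_order po)); [exact Sz0|].
    intros z Sz. apply point_interval_inj. unfold iright in HSq. rewrite !HSq; auto.
  - intros p S' s' HS' _ Hs' Hlefts.
    destruct (interval_sup_ends HS' Hs') as [Hl' _].
    apply (f_equal point_interval), (sup_unique po Hl).
    apply (is_sup_ext (S := image lo S')); [|exact Hl'].
    exact (image_iff_of_injective point_interval_inj Hlefts).
Qed.

Lemma interval_axiom_iv x :
  compact_wrt (scott_open interval_le) (fun y => maximal interval_le y /\ interval_le x y).
Proof.
  intros I U HU Hcover.
  set (V := fun i c => U i (point_interval c)).
  destruct (proj2 gh (lo x) (hi x) I V) as [l Hl].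
  - intros i c Hc. destruct (approximants_directed_sup (point_interval c)) as [Hd Hs].
    destruct (proj2 (HU i) _ _ Hd Hs Hc) as [z [[Z1 Z2] Uz]]; simpl in Z1, Z2.
    exists (lo z), (hi z); split; [exact Z1|split; [exact Z2|]].
    intros w W1 W2. apply (proj1 (HU i) z); [exact Uz|].
    split; simpl; apply (way_below_le po); assumption.
  - intros c [H1 H2]. apply Hcover.
    split; [apply interval_maximal_iff; reflexivity|split; assumption].
  - exists l. intros y [Hy [L1 L2]]. apply interval_maximal_iff in Hy.
    destruct (Hl (lo y)) as [i [Hi Vi]].
    + split; [exact L1|rewrite Hy; exact L2].
    + exists i; split; [exact Hi|].
      replace y with (point_interval (lo y)); [exact Vi|apply interval_eq; auto].
Qed.

Lemma interval_interval_domain : interval_domain_axioms interval_le ileft iright.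
Proof.
  constructor.
  - exact interval_axiom_i.
  - exact interval_axiom_ii.
  - exact interval_axiom_iii_left.
  - exact interval_axiom_iii_right.
  - exact interval_axiom_iv.
Qed.

End IntervalDomainOfPoset.

(** * The globally hyperbolic poset of maximal points of an interval domain *)

Section MaximalPoints.
Variables (D : Type) (le : D -> D -> Prop) (L R : D -> D).
Hypothesis po : is_partial_order le.
Hypothesis ip : interval_poset_axioms le L R.

Lemma left_maximal z : maximal le (L z). Proof. apply (ip_left_max ip). Qed.
Lemma right_maximal z : maximal le (R z). Proof. apply (ip_right_max ip). Qed.

Lemma left_of_maximal p : maximal le p -> L p = p.
Proof. intros Hp. apply Hp, (ip_meet ip p). Qed.

Lemma right_of_maximal p : maximal le p -> R p = p.
Proof. intros Hp. apply Hp, (ip_meet ip p). Qed.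

Lemma left_left z : L (L z) = L z. Proof. apply left_of_maximal, left_maximal. Qed.
Lemma right_left z : R (L z) = L z. Proof. apply right_of_maximal, left_maximal. Qed.
Lemma left_right z : L (R z) = R z. Proof. apply left_of_maximal, right_maximal. Qed.
Lemma right_right z : R (R z) = R z. Proof. apply right_of_maximal, right_maximal. Qed.

Lemma eq_of_ends z z' : L z = L z' -> R z = R z' -> z = z'.
Proof.
  intros E1 E2. destruct (ip_meet ip z) as [A1 [A2 A3]], (ip_meet ip z') as [B1 [B2 B3]].
  apply (le_antisym po).
  - apply B3; [rewrite <- E1|rewrite <- E2]; assumption.
  - apply A3; [rewrite E1|rewrite E2]; assumption.
Qed.

Definition end_le (a b : D) : Prop := exists z, L z = a /\ R z = b.

Lemma end_le_ends z : end_le (L z) (R z).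
Proof. exists z; auto. Qed.

Lemma end_le_maximal a b : end_le a b -> maximal le a /\ maximal le b.
Proof. intros [z [<- <-]]. split; [apply left_maximal|apply right_maximal]. Qed.

Lemma end_le_refl p : maximal le p -> end_le p p.
Proof. intros Hp. exists p; split; [apply left_of_maximal|apply right_of_maximal]; exact Hp. Qed.

Lemma end_le_trans a b c : end_le a b -> end_le b c -> end_le a c.
Proof.
  intros [z1 [E1 E2]] [z2 [E3 E4]]. assert (E : R z1 = L z2) by congruence.
  destruct (ip_concat ip E) as [m [_ [F1 F2]]]. exists m; split; congruence.
Qed.

Lemma end_le_antisym a b : end_le a b -> end_le b a -> a = b.
Proof.
  intros [z1 [E1 E2]] [z2 [E3 E4]]. assert (E : R z1 = L z2) by congruence.
  destruct (ip_concat ip E) as [m [[Hmz1 _] [F1 F2]]].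
  assert (Ha : maximal le a) by (rewrite <- E1; apply left_maximal).
  assert (m = a) as ->.
  { apply eq_of_ends; [rewrite (left_of_maximal Ha)|rewrite (right_of_maximal Ha)]; congruence. }
  rewrite <- E2, (Ha z1 Hmz1). symmetry; apply right_of_maximal, Ha.
Qed.

Lemma end_le_of_le x y : le x y -> end_le (L x) (L y) /\ end_le (R y) (R x).
Proof.
  intros H. destruct (ip_meet ip y) as [HyL [HyR _]]. split.
  - destruct (proj1 (ip_split ip (left_maximal (z := y)) (le_trans po H HyL))) as [m [_ [E1 E2]]].
    exists m; auto.
  - destruct (proj2 (ip_split ip (right_maximal (z := y)) (le_trans po H HyR))) as [m [_ [E1 E2]]].
    exists m; auto.
Qed.

(* Concatenating [L x, L y], y and [R y, R x] gives an element with the ends of x. *)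
Lemma le_of_end_le x y : end_le (L x) (L y) -> end_le (R y) (R x) -> le x y.
Proof.
  intros [z1 [E1 E2]] [z2 [E3 E4]].
  destruct (ip_concat ip E2) as [m1 [[M1 [M2 _]] [F1 F2]]].
  assert (E : R m1 = L z2) by congruence.
  destruct (ip_concat ip E) as [m2 [[M3 [M4 _]] [F3 F4]]].
  assert (m2 = x) as <- by (apply eq_of_ends; congruence).
  apply (le_trans po) with m1; assumption.
Qed.

Definition max_point : Type := {x : D | maximal le x}.

Definition max_le (p q : max_point) : Prop := end_le (proj1_sig p) (proj1_sig q).

Lemma max_point_eq (p q : max_point) : proj1_sig p = proj1_sig q -> p = q.
Proof. destruct p, q; simpl; intros ->; f_equal; apply proof_irrelevance. Qed.

Lemma max_le_partial_order : is_partial_order max_le.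
Proof.
  unfold max_le; split; [|split].
  - intros p. apply end_le_refl, proj2_sig.
  - intros p q H1 H2. apply max_point_eq, end_le_antisym; assumption.
  - intros p q r H1 H2. eapply end_le_trans; eassumption.
Qed.

Definition max_left z : max_point := exist _ (L z) (left_maximal (z := z)).
Definition max_right z : max_point := exist _ (R z) (right_maximal (z := z)).

Lemma max_left_of_max_point (p : max_point) : max_left (proj1_sig p) = p.
Proof. apply max_point_eq, left_of_maximal, proj2_sig. Qed.

Lemma max_right_of_max_point (p : max_point) : max_right (proj1_sig p) = p.
Proof. apply max_point_eq, right_of_maximal, proj2_sig. Qed.

Lemma max_left_mono x y : le x y -> max_le (max_left x) (max_left y).
Proof. intros H. apply (end_le_of_le H). Qed.

Lemma max_right_antitone x y : le x y -> max_le (max_right y) (max_right x).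
Proof. intros H. apply (end_le_of_le H). Qed.

Definition spans_to (P : D -> Prop) (b : D) : D -> Prop := fun w => R w = b /\ P (L w).

Lemma left_ends_spans_to P b :
  (forall a, P a -> end_le a b) -> forall a, image L (spans_to P b) a <-> P a.
Proof.
  intros HPb a; split.
  - intros [w [[_ Pw] <-]]. exact Pw.
  - intros Pa. destruct (HPb a Pa) as [w [Ew1 Ew2]].
    exists w; split; [split; [exact Ew2|rewrite Ew1; exact Pa]|exact Ew1].
Qed.

Lemma spans_to_directed P b :
  directed end_le P -> (forall a, P a -> end_le a b) -> directed le (spans_to P b).
Proof.
  intros [[a0 Pa0] dirP] HPb.
  assert (Hb : maximal le b) by exact (proj2 (end_le_maximal (HPb a0 Pa0))).
  split.
  - destruct (HPb a0 Pa0) as [w [E1 E2]]. exists w; split; [exact E2|rewrite E1; exact Pa0].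
  - intros w1 w2 [F1 P1] [F2 P2].
    destruct (dirP _ _ P1 P2) as [a3 [Pa3 [L1 L2]]].
    destruct (HPb a3 Pa3) as [w3 [E1 E2]].
    exists w3; split; [split; [exact E2|rewrite E1; exact Pa3]|].
    split; apply le_of_end_le; rewrite ?E1, ?E2, ?F1, ?F2; auto using end_le_refl.
Qed.

Lemma sup_spans_to S s :
  is_sup le S s -> is_sup le (spans_to (image L S) (R s)) s.
Proof.
  intros Hs. split.
  - intros w [Ew [z [Sz Ez]]]. apply le_of_end_le.
    + rewrite <- Ez. apply (end_le_of_le (proj1 Hs z Sz)).
    + rewrite Ew. apply end_le_refl, right_maximal.
  - intros u Hu. apply Hs. intros z Sz.
    destruct (end_le_trans (proj1 (end_le_of_le (proj1 Hs z Sz))) (end_le_ends s))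
      as [w [Ew1 Ew2]].
    apply (le_trans po) with w.
    + apply le_of_end_le.
      * rewrite Ew1. apply end_le_refl, left_maximal.
      * rewrite Ew2. apply (end_le_of_le (proj1 Hs z Sz)).
    + apply Hu. split; [exact Ew2|exists z; auto].
Qed.

Hypothesis cd : continuous_dcpo le.
Hypothesis ax : interval_domain_axioms le L R.

(* By axiom (iii) the sup t of the elements reaching from L(S) to an upper bound u has the
   same left end as s, so t witnesses L s <= u. *)
Lemma sup_left_ends S s : directed le S -> is_sup le S s ->
  is_sup max_le (image max_left S) (max_left s).
Proof.
  intros HS Hs. split.
  - intros _ [z [Sz <-]]. apply max_left_mono, Hs, Sz.
  - intros u Hu.
    assert (HP : directed end_le (image L S)).
    { apply (directed_image (leA := le)); [|exact HS]. intros x y H; apply (end_le_of_le H). }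
    assert (Hbu : forall a, image L S a -> end_le a (proj1_sig u)).
    { intros _ [z [Sz <-]]. apply (Hu (max_left z)). exists z; auto. }
    assert (Hbs : forall a, image L S a -> end_le a (R s)).
    { intros _ [z [Sz <-]]. exact (end_le_trans (proj1 (end_le_of_le (proj1 Hs z Sz)))
                                              (end_le_ends s)). }
    destruct (proj2 cd _ (spans_to_directed HP Hbu)) as [t Ht].
    destruct (idom_iii_right ax (spans_to_directed HP Hbu) (fun a H => proj1 H) Ht) as [Rt _].
    destruct (idom_iii_right ax (spans_to_directed HP Hbs) (fun a H => proj1 H)
                (sup_spans_to Hs)) as [_ Hlefts].
    assert (Ets : L s = L t).
    { apply (Hlefts _ _ t (spans_to_directed HP Hbu) (fun a H => proj1 H) Ht).
      intros a. change (image L (spans_to (image L S) (proj1_sig u)) a <-> image L (spans_to (image L S) (R s)) a).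
      rewrite (left_ends_spans_to Hbu), (left_ends_spans_to Hbs). reflexivity. }
    exists t; split; [symmetry; exact Ets|exact Rt].
Qed.

Lemma spans_to_sup_in_right_fiber (A : max_point -> Prop) s :
  is_sup max_le A s ->
  is_sup_in le (right_fiber R (proj1_sig s)) (spans_to (image (@proj1_sig _ _) A) (proj1_sig s))
    (proj1_sig s).
Proof.
  intros Hs. assert (Hsm := proj2_sig s).
  split.
  - intros w [Ew [a [Aa Ea]]]. apply le_of_end_le.
    + rewrite (left_of_maximal Hsm), <- Ea. apply (proj1 Hs a Aa).
    + rewrite (right_of_maximal Hsm), Ew. apply end_le_refl, Hsm.
  - intros u Hu Hub. apply le_of_end_le.
    + rewrite (left_of_maximal Hsm). apply (proj2 Hs (max_left u)). intros a Aa.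
      destruct (proj1 Hs a Aa) as [w [Ew1 Ew2]].
      assert (Hwu : le w u) by (apply Hub; split; [exact Ew2|exists a; auto]).
      unfold max_le; simpl. rewrite <- Ew1. apply (end_le_of_le Hwu).
    + rewrite Hu, (right_of_maximal Hsm). apply end_le_refl, Hsm.
Qed.

Lemma max_way_below_of_way_above z (p q : max_point) :
  proj1_sig p = L z -> proj1_sig q = R z ->
  (exists a, way_below le z a) -> way_below max_le p q.
Proof.
  intros Ep Eq Hz. rewrite (proj1 (idom_ii ax z)) in Hz.
  intros A s HA Hs Hqs.
  assert (Hps : max_le p s) by (apply end_le_trans with (proj1_sig q); [exists z|]; auto).
  destruct Hps as [y [Ey1 Ey2]].
  assert (Hyz : le y z).
  { apply le_of_end_le.
    - rewrite Ey1, <- Ep. apply end_le_refl, proj2_sig.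
    - rewrite Ey2, <- Eq. exact Hqs. }
  set (P := image (@proj1_sig _ _) A).
  assert (HP : directed end_le P) by (apply directed_image with (leA := max_le); auto).
  assert (HPs : forall a, P a -> end_le a (proj1_sig s)) by (intros _ [a [Aa <-]]; apply Hs, Aa).
  specialize (Hz y (eq_trans Ey1 Ep) Hyz). rewrite Ey2 in Hz.
  destruct (Hz (spans_to P (proj1_sig s)) (proj1_sig s)) as [w [[_ [a [Aa Ea]]] Hyw]].
  - intros w [Ew _]. exact Ew.
  - exact (spans_to_directed HP HPs).
  - apply right_of_maximal, proj2_sig.
  - exact (spans_to_sup_in_right_fiber Hs).
  - apply le_refl, po.
  - exists a; split; [exact Aa|]. unfold max_le. rewrite Ea, <- Ey1.
    apply (end_le_of_le Hyw).
Qed.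

Lemma way_above_of_max_way_below z (p q : max_point) :
  proj1_sig p = L z -> proj1_sig q = R z ->
  way_below max_le p q -> exists a, way_below le z a.
Proof.
  intros Ep Eq H. rewrite (proj1 (idom_ii ax z)).
  intros y Ey Hyz S s HSf HS _ Hsup Hys.
  assert (Es : s = R y) by exact (right_maximal (z := y) Hys). subst s.
  destruct (proj2 cd S HS) as [t Ht].
  destruct (idom_iii_right ax HS HSf Ht) as [Rt _].
  assert (Et : R y = t).
  { apply (le_antisym po); [exact (proj2 Hsup t Rt (proj1 Ht))|exact (proj2 Ht _ (proj1 Hsup))]. }
  assert (Hsb : is_sup max_le (image max_left S) (max_right y)).
  { replace (max_right y) with (max_left t); [exact (sup_left_ends HS Ht)|].
    apply max_point_eq; simpl. rewrite <- Et. apply left_right. }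
  assert (Hqy : max_le q (max_right y)).
  { unfold max_le; simpl. rewrite Eq. apply (end_le_of_le Hyz). }
  destruct (H _ _ (directed_image max_left_mono HS) Hsb Hqy) as [_ [[w [Sw <-]] Hpw]].
  exists w; split; [exact Sw|]. apply le_of_end_le.
  - rewrite Ey, <- Ep. exact Hpw.
  - rewrite (HSf w Sw). apply end_le_refl, right_maximal.
Qed.

Lemma way_below_max_iff z (p q : max_point) :
  proj1_sig p = L z -> proj1_sig q = R z ->
  ((exists a, way_below le z a) <-> way_below max_le p q).
Proof.
  intros Ep Eq. split; [apply max_way_below_of_way_above|apply way_above_of_max_way_below];
    assumption.
Qed.

End MaximalPoints.

Lemma is_meet_comm (D : Type) (le : D -> D -> Prop) a b m :
  is_meet le a b m -> is_meet le b a m.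
Proof. intros [H1 [H2 H3]]; split; [|split]; auto. Qed.

Section SwappedEnds.
Variables (D : Type) (le : D -> D -> Prop) (L R : D -> D).
Hypothesis ip : interval_poset_axioms le L R.

Lemma interval_poset_swap : interval_poset_axioms le R L.
Proof.
  constructor.
  - exact (ip_right_max ip).
  - exact (ip_left_max ip).
  - intros x. apply is_meet_comm, (ip_meet ip).
  - intros x y E. destruct (ip_concat ip (x := y) (y := x) (eq_sym E)) as [m [Hm [E1 E2]]].
    exists m; split; [apply is_meet_comm|split]; assumption.
  - intros x p Hp Hxp.
    destruct (ip_split ip Hp Hxp) as [[m1 [H1 [E1 E2]]] [m2 [H2 [E3 E4]]]].
    split; [exists m2|exists m1]; split; try (apply is_meet_comm; assumption); auto.
Qed.

Lemma interval_domain_swap :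
  interval_domain_axioms le L R -> interval_domain_axioms le R L.
Proof.
  intros ax. constructor.
  - intros x p Hp Hxp. destruct (idom_i ax Hp Hxp) as [A B].
    split; intros m Hm; [apply B|apply A]; apply is_meet_comm, Hm.
  - intros x. destruct (idom_ii ax x) as [A B]. split; [exact B|exact A].
  - exact (idom_iii_right ax).
  - exact (idom_iii_left ax).
  - exact (idom_iv ax).
Qed.

Lemma max_le_swap : max_le (le := le) R L = transp _ (max_le L R).
Proof.
  apply functional_extensionality; intro p; apply functional_extensionality; intro q.
  apply propositional_extensionality. unfold max_le, end_le, transp.
  split; intros [z [E1 E2]]; exists z; auto.
Qed.

Lemma max_left_swap : max_left interval_poset_swap = max_right ip.
Proof. apply functional_extensionality; intro z. apply max_point_eq; reflexivity. Qed.

End SwappedEnds.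

Section MaximalPointsGloballyHyperbolic.
Variables (D : Type) (le : D -> D -> Prop) (L R : D -> D).
Hypothesis po : is_partial_order le.
Hypothesis ip : interval_poset_axioms le L R.
Hypothesis cd : continuous_dcpo le.
Hypothesis ax : interval_domain_axioms le L R.

Local Notation mle := (max_le (le := le) L R).
Let max_le_po : is_partial_order mle := max_le_partial_order po ip.

Lemma sup_right_ends S s : directed le S -> is_sup le S s ->
  is_inf mle (image (max_right ip) S) (max_right ip s).
Proof.
  intros HS Hs.
  pose proof (sup_left_ends po (interval_poset_swap ip) cd (interval_domain_swap ax) HS Hs) as H.
  rewrite max_le_swap, max_left_swap in H. exact H.
Qed.

Lemma way_below_max_iff_transp z (p q : max_point le) :
  proj1_sig p = L z -> proj1_sig q = R z ->
  ((exists a, way_below le z a) <-> way_below (transp _ mle) q p).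
Proof.
  intros Ep Eq.
  pose proof (way_below_max_iff po (interval_poset_swap ip) cd (interval_domain_swap ax) Eq Ep)
    as H.
  rewrite max_le_swap in H. exact H.
Qed.

Lemma max_way_below_transp x y :
  way_below mle x y <-> way_below (transp _ mle) y x.
Proof.
  destruct (classic (mle x y)) as [[z [E1 E2]]|N].
  - rewrite <- (way_below_max_iff_transp (eq_sym E1) (eq_sym E2)).
    symmetry; apply (way_below_max_iff po ip cd ax); symmetry; assumption.
  - split; intro H; exfalso; apply N.
    + exact (way_below_le max_le_po H).
    + exact (way_below_le (transp_partial_order max_le_po) H).
Qed.

Lemma le_max_point_iff z (c : max_point le) :
  le z (proj1_sig c) <-> mle (max_left ip z) c /\ mle c (max_right ip z).
Proof.
  assert (Hc := proj2_sig c). split.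
  - intros H. destruct (end_le_of_le po ip H) as [H1 H2].
    rewrite (left_of_maximal ip Hc) in H1. rewrite (right_of_maximal ip Hc) in H2.
    split; assumption.
  - intros [H1 H2]. apply (le_of_end_le po ip).
    + rewrite (left_of_maximal ip Hc). exact H1.
    + rewrite (right_of_maximal ip Hc). exact H2.
Qed.

(* Axiom (i) applied to the meets L z ⊓ x and x ⊓ R z of an approximant z << x. *)
Lemma max_approximants (x : max_point le) : exists S, directed le S /\ is_sup le S (proj1_sig x) /\
  forall z, S z ->
    way_below mle (max_left ip z) x /\ way_below mle x (max_right ip z).
Proof.
  destruct cd as [[B HB] _]. destruct (HB (proj1_sig x)) as [S [HSB [HS Hs]]].
  exists S; split; [exact HS|split; [exact Hs|]]. intros z Sz.
  destruct (HSB z Sz) as [_ Hzx].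
  assert (Hx := proj2_sig x).
  destruct (idom_i ax Hx Hzx) as [A1 A2].
  destruct (end_le_of_le po ip (way_below_le po Hzx)) as [[m0 [F1 F2]] [m1 [G1 G2]]].
  rewrite (left_of_maximal ip Hx) in F2. rewrite (right_of_maximal ip Hx) in G1.
  split.
  - assert (Hm0 : is_meet le (L z) (proj1_sig x) m0)
      by (rewrite <- F1, <- F2; apply (ip_meet ip)).
    exact (proj1 (way_below_max_iff po ip cd ax (p := max_left ip z) (eq_sym F1) (eq_sym F2))
             (A1 m0 Hm0)).
  - assert (Hm1 : is_meet le (proj1_sig x) (R z) m1)
      by (rewrite <- G1, <- G2; apply (ip_meet ip)).
    exact (proj1 (way_below_max_iff po ip cd ax (q := max_right ip z) (eq_sym G1) (eq_sym G2))
             (A2 m1 Hm1)).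
Qed.

Lemma max_continuous : continuous_poset mle.
Proof.
  exists (fun _ => True). intros x. destruct (max_approximants x) as [S [HS [Hs Hz]]].
  exists (image (max_left ip) S). split; [|split].
  - intros _ [z [Sz <-]]. split; [exact I|apply Hz, Sz].
  - exact (directed_image (max_left_mono po ip) HS).
  - rewrite <- (max_left_of_max_point ip x). exact (sup_left_ends po ip cd ax HS Hs).
Qed.

Lemma max_wb_up x :
  filtered mle (wb_up mle x) /\ is_inf mle (wb_up mle x) x.
Proof.
  assert (E : wb_up mle x = wb_down (transp _ mle) x).
  { apply functional_extensionality; intro a.
    apply propositional_extensionality, max_way_below_transp. }
  rewrite E. apply (wb_down_directed_sup (transp_partial_order max_le_po)).
  destruct (max_approximants x) as [S [HS [Hs Hz]]].
  exists (image (max_right ip) S). split; [|split].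
  - intros _ [z [Sz <-]]. apply max_way_below_transp, Hz, Sz.
  - exact (directed_image (leB := transp _ mle) (max_right_antitone po ip) HS).
  - rewrite <- (max_right_of_max_point ip x). exact (sup_right_ends HS Hs).
Qed.

Let max_approximating : approximating mle :=
  continuous_poset_approximating max_le_po max_continuous.

Lemma scott_open_way_below_ends (P : max_point le -> max_point le -> Prop) :
  scott_open le (fun w => exists e g,
    P e g /\ way_below mle e (max_left ip w) /\ way_below mle (max_right ip w) g).
Proof.
  split.
  - intros w w' [e [g [HP [H1 H2]]]] Hw. exists e, g; split; [exact HP|split].
    + exact (way_below_le_trans max_le_po H1 (max_left_mono po ip Hw)).
    + exact (le_way_below_trans max_le_po (max_right_antitone po ip Hw) H2).
  - intros S s HS Hs [e [g [HP [H1 H2]]]].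
    destruct (way_below_interpolate max_le_po max_approximating H1) as [e' [He1 He2]].
    destruct (He2 _ _ (directed_image (max_left_mono po ip) HS) (sup_left_ends po ip cd ax HS Hs)
                (le_refl max_le_po _)) as [_ [[z1 [S1 <-]] Hz1]].
    destruct (way_below_interpolate max_le_po max_approximating H2) as [g' [Hg1 Hg2]].
    apply max_way_below_transp in Hg1.
    destruct (Hg1 _ _ (directed_image (leB := transp _ mle) (max_right_antitone po ip) HS)
                (sup_right_ends HS Hs) (le_refl max_le_po _)) as [_ [[z2 [S2 <-]] Hz2]].
    destruct HS as [_ dirS]. destruct (dirS z1 z2 S1 S2) as [z3 [S3 [L1 L2]]].
    exists z3; split; [exact S3|]. exists e, g; split; [exact HP|split].
    + apply (way_below_le_trans max_le_po He1).
      exact (le_trans max_le_po Hz1 (max_left_mono po ip L1)).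
    + apply (le_way_below_trans max_le_po) with g'; [|exact Hg2].
      exact (le_trans max_le_po (max_right_antitone po ip L2) Hz2).
Qed.

(* The points of [a, b] are the maximal elements above an element z with ends a and b,
   and interval open sets pull back to Scott open sets, so axiom (iv) applies. *)
Lemma max_closed_interval_compact a b :
  compact_wrt (interval_open mle) (closed_interval mle a b).
Proof.
  destruct (classic (mle a b)) as [[z [Ea Eb]]|N].
  2:{ intros I U _ _. exists nil. intros c [H1 H2]. exfalso. exact (N (le_trans max_le_po H1 H2)). }
  assert (Eza : max_left ip z = a) by (apply max_point_eq; exact Ea).
  assert (Ezb : max_right ip z = b) by (apply max_point_eq; exact Eb).
  intros I U HU Hcover.
  set (U' := fun i w => exists e g, (forall v, way_below mle e v -> way_below mle v g -> U i v) /\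
               way_below mle e (max_left ip w) /\ way_below mle (max_right ip w) g).
  destruct (idom_iv ax (x := z) (U := U') (fun i => scott_open_way_below_ends _)) as [l Hl].
  - intros y [Hy Hzy].
    set (c := exist _ y Hy : max_point le).
    assert (Ec : max_left ip y = c /\ max_right ip y = c)
      by exact (conj (max_left_of_max_point ip c) (max_right_of_max_point ip c)).
    destruct (Hcover c) as [i Hi].
    + rewrite <- Eza, <- Ezb. exact (proj1 (le_max_point_iff z c) Hzy).
    + exists i. destruct (HU i _ Hi) as [e [g [H1 [H2 H3]]]].
      exists e, g. rewrite (proj1 Ec), (proj2 Ec). auto.
  - exists l. intros c Hc.
    destruct (Hl (proj1_sig c)) as [i [Hi [e [g [H1 [H2 H3]]]]]].
    + split; [exact (proj2_sig c)|]. apply le_max_point_iff. rewrite Eza, Ezb. exact Hc.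
    + exists i; split; [exact Hi|]. apply H1.
      * rewrite <- (max_left_of_max_point ip c). exact H2.
      * rewrite <- (max_right_of_max_point ip c). exact H3.
Qed.

Lemma max_globally_hyperbolic : globally_hyperbolic mle.
Proof.
  split; [split; [exact max_continuous|split]|exact max_closed_interval_compact].
  - exact max_way_below_transp.
  - exact max_wb_up.
Qed.

End MaximalPointsGloballyHyperbolic.

(** * Order isomorphisms *)

Section OrderIsomorphisms.
Variables (A B : Type) (leA : A -> A -> Prop) (leB : B -> B -> Prop).

Definition order_iso (f : A -> B) (g : B -> A) : Prop :=
  (forall b, f (g b) = b) /\ (forall a, g (f a) = a) /\
  (forall x y, leA x y -> leB (f x) (f y)) /\ (forall x y, leB x y -> leA (g x) (g y)).

Lemma order_iso_sup f g S s :
  order_iso f g -> is_sup leA S s -> is_sup leB (image f S) (f s).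
Proof.
  intros [fg [gf [mf mg]]] [ub least]. split.
  - intros _ [a [Sa <-]]. apply mf, ub, Sa.
  - intros u Hu. rewrite <- (fg u). apply mf, least.
    intros a Sa. rewrite <- (gf a). apply mg, Hu. exists a; auto.
Qed.

Lemma order_iso_scott_continuous f g :
  order_iso f g -> continuous_map (scott_open leA) (scott_open leB) f.
Proof.
  intros Hiso V [Vup Vsup]. pose proof Hiso as [_ [_ [mf _]]]. split.
  - intros x y Hx Hxy. exact (Vup _ _ Hx (mf _ _ Hxy)).
  - intros S s HS Hs Hfs.
    destruct (Vsup _ _ (directed_image mf HS) (order_iso_sup Hiso Hs) Hfs)
      as [_ [[a [Sa <-]] Ha]].
    exists a; auto.
Qed.

End OrderIsomorphisms.

Lemma order_iso_sym (A B : Type) (leA : A -> A -> Prop) (leB : B -> B -> Prop) f g :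
  order_iso leA leB f g -> order_iso leB leA g f.
Proof. intros [fg [gf [mf mg]]]. repeat split; assumption. Qed.

Lemma order_iso_way_below (A B : Type) (leA : A -> A -> Prop) (leB : B -> B -> Prop) f g x y :
  order_iso leA leB f g -> way_below leA x y -> way_below leB (f x) (f y).
Proof.
  intros Hiso H S s HS Hs Hy. pose proof Hiso as [fg [gf [mf mg]]].
  destruct (H _ _ (directed_image mg HS) (order_iso_sup (order_iso_sym Hiso) Hs))
    as [_ [[b [Sb <-]] Hb]].
  - rewrite <- (gf y). apply mg, Hy.
  - exists b; split; [exact Sb|]. rewrite <- (fg b). apply mf, Hb.
Qed.

Lemma order_iso_interval_continuous (A B : Type) (leA : A -> A -> Prop) (leB : B -> B -> Prop) f g :
  order_iso leA leB f g -> continuous_map (interval_open leA) (interval_open leB) f.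
Proof.
  intros Hiso V HV x Hx. pose proof Hiso as [fg [gf _]].
  assert (Hiso' := order_iso_sym Hiso).
  destruct (HV _ Hx) as [e [h [H1 [H2 H3]]]].
  exists (g e), (g h). rewrite <- (gf x).
  split; [|split]; [apply (order_iso_way_below Hiso'); assumption..|].
  intros w W1 W2. apply H3.
  - rewrite <- (fg e). exact (order_iso_way_below Hiso W1).
  - rewrite <- (fg h). exact (order_iso_way_below Hiso W2).
Qed.

(** * The two functors and the equivalence *)

Definition interval_domain_of (X : GHPoset) : IntervalDomain :=
  {| in_car := interval (@gh_le X);
     in_le := @interval_le X (@gh_le X);
     in_po := interval_le_partial_order (gh_po X);
     in_left := ileft (gh_po X);
     in_right := iright (gh_po X);
     in_ip := interval_interval_poset (gh_po X);
     in_cdcpo := interval_continuous_dcpo (gh_po X) (gh_gh X);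
     in_ax := interval_interval_domain (gh_po X) (gh_gh X) |}.

Definition interval_map (X Y : GHPoset) (f : GMor X Y) (p : interval (@gh_le X)) :
  interval (@gh_le Y) := mkI (gm_mono f (lo_le_hi p)).

Lemma interval_map_mono (X Y : GHPoset) (f : GMor X Y) p q :
  interval_le p q -> interval_le (interval_map f p) (interval_map f q).
Proof. intros [H1 H2]. split; apply (gm_mono f); assumption. Qed.

(* Suprema of intervals are computed endwise, and f preserves directed suprema and
   filtered infima. *)
Lemma interval_map_scott_continuous (X Y : GHPoset) (f : GMor X Y) :
  continuous_map (scott_open (@interval_le X (@gh_le X))) (scott_open (@interval_le Y (@gh_le Y)))
    (interval_map f).
Proof.
  intros V [Vup Vsup]. split.
  - intros p q Hp Hpq. exact (Vup _ _ Hp (interval_map_mono f Hpq)).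
  - intros S s HS Hs Hfs.
    destruct (interval_sup_ends (gh_po X) (gh_gh X) HS Hs) as [Hl Hr].
    pose proof (gh_map_preserves_sup (gh_po X) (gh_po Y) (gh_gh X) (gh_gh Y) (@gm_mono X Y f)
                  (@gm_cont X Y f) (directed_lows HS) Hl) as Hl'.
    pose proof (gh_map_preserves_inf (gh_po X) (gh_po Y) (gh_gh X) (gh_gh Y) (@gm_mono X Y f)
                  (@gm_cont X Y f) (filtered_highs HS) Hr) as Hr'.
    assert (Hs' : is_sup (@interval_le Y (@gh_le Y)) (image (interval_map f) S) (interval_map f s)).
    { split.
      - intros _ [a [Sa <-]]. apply interval_map_mono, Hs, Sa.
      - intros u Hu. split; simpl; [apply Hl'|apply Hr'];
          intros _ [_ [[z [Sz <-]] <-]]; apply (Hu (interval_map f z)); exists z; auto. }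
    destruct (Vsup _ _ (directed_image (interval_map_mono f) HS) Hs' Hfs)
      as [_ [[a [Sa <-]] Ha]].
    exists a; auto.
Qed.

Definition interval_morphism (X Y : GHPoset) (f : GMor X Y) :
  INMor (interval_domain_of X) (interval_domain_of Y).
Proof.
  refine {| im_fun := interval_map f : interval_domain_of X -> interval_domain_of Y |}.
  - exact (interval_map_scott_continuous f).
  - intros x. apply interval_eq; reflexivity.
  - intros x. apply interval_eq; reflexivity.
Defined.

Definition interval_functor : Functor G_cat IN_cat.
Proof.
  refine (@Build_Functor G_cat IN_cat interval_domain_of interval_morphism _ _ _).
  - intros X Y f g H x. apply interval_eq; apply H.
  - intros X x. apply interval_eq; reflexivity.
  - intros X Y Z g f x. apply interval_eq; reflexivity.
Defined.

Definition max_points_of (D : IntervalDomain) : GHPoset :=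
  {| gh_car := max_point (@in_le D);
     gh_le := max_le (@in_left D) (@in_right D);
     gh_po := max_le_partial_order (in_po D) (in_ip D);
     gh_gh := max_globally_hyperbolic (in_po D) (in_ip D) (in_cdcpo D) (in_ax D) |}.

Lemma in_morphism_maximal (D E : IntervalDomain) (f : INMor D E) x :
  maximal (@in_le D) x -> maximal (@in_le E) (f x).
Proof.
  intros Hx. rewrite <- (left_of_maximal (in_ip D) Hx), (im_left f).
  apply (left_maximal (in_ip E)).
Qed.

Definition max_map (D E : IntervalDomain) (f : INMor D E) (x : max_point (@in_le D)) :
  max_point (@in_le E) := exist _ (f (proj1_sig x)) (in_morphism_maximal (f := f) (proj2_sig x)).

Lemma max_left_map (D E : IntervalDomain) (f : INMor D E) (w : max_point (@in_le D)) :
  max_left (in_ip E) (f (proj1_sig w)) = max_map f w.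
Proof.
  apply max_point_eq; simpl.
  rewrite <- (im_left f), (left_of_maximal (in_ip D) (proj2_sig w)). reflexivity.
Qed.

Lemma max_right_map (D E : IntervalDomain) (f : INMor D E) (w : max_point (@in_le D)) :
  max_right (in_ip E) (f (proj1_sig w)) = max_map f w.
Proof.
  apply max_point_eq; simpl.
  rewrite <- (im_right f), (right_of_maximal (in_ip D) (proj2_sig w)). reflexivity.
Qed.

(* A basic neighbourhood e << f x << g pulls back along L, R to a Scott open set; Scott
   continuity of f and an approximant z of x give the neighbourhood L z << w << R z. *)
Lemma max_map_interval_continuous (D E : IntervalDomain) (f : INMor D E) :
  continuous_map (interval_open (max_le (@in_left D) (@in_right D)))
                 (interval_open (max_le (@in_left E) (@in_right E))) (max_map f).
Proof.
  intros V HV x Hx. destruct (HV _ Hx) as [e [g [He [Hg Hn]]]].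
  pose proof (scott_open_way_below_ends (in_po E) (in_ip E) (in_cdcpo E) (in_ax E)
                (fun e' g' => e' = e /\ g' = g)) as HU.
  pose proof (im_scott f HU) as [fU_up fU_sup].
  destruct (max_approximants (in_po D) (in_ip D) (in_cdcpo D) (in_ax D) x) as [S [HS [Hs Hz]]].
  destruct (fU_sup S (proj1_sig x) HS Hs) as [z [Sz Uz]].
  { exists e, g. rewrite max_left_map, max_right_map. auto. }
  exists (max_left (in_ip D) z), (max_right (in_ip D) z). split; [apply Hz, Sz|split; [apply Hz, Sz|]].
  intros w W1 W2.
  pose proof (max_le_partial_order (in_po D) (in_ip D)) as poD.
  assert (Hzw : in_le z (proj1_sig w)).
  { apply (le_max_point_iff (in_po D) (in_ip D)).
    split; apply (way_below_le poD); assumption. }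
  destruct (fU_up _ _ Uz Hzw)
    as [e' [g' [[-> ->] [U1 U2]]]].
  rewrite max_left_map in U1. rewrite max_right_map in U2. apply Hn; assumption.
Qed.

Definition max_morphism (D E : IntervalDomain) (f : INMor D E) :
  GMor (max_points_of D) (max_points_of E).
Proof.
  refine {| gm_fun := max_map f : max_points_of D -> max_points_of E |}.
  - intros x y [z [E1 E2]]. exists (f z). simpl.
    rewrite <- (im_left f), <- (im_right f), E1, E2. split; reflexivity.
  - exact (max_map_interval_continuous (f := f)).
Defined.

Definition max_functor : Functor IN_cat G_cat.
Proof.
  refine (@Build_Functor IN_cat G_cat max_points_of max_morphism _ _ _).
  - intros X Y f g H x. apply max_point_eq, H.
  - intros X x. apply max_point_eq; reflexivity.
  - intros X Y Z g f x. apply max_point_eq; reflexivity.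
Defined.

Definition gmor_of_order_iso (X Y : GHPoset) (f : X -> Y) (g : Y -> X)
  (H : order_iso (@gh_le X) (@gh_le Y) f g) : GMor X Y :=
  {| gm_fun := f; gm_mono := proj1 (proj2 (proj2 H));
     gm_cont := order_iso_interval_continuous H |}.

Definition inmor_of_order_iso (D E : IntervalDomain) (f : D -> E) (g : E -> D)
  (H : order_iso (@in_le D) (@in_le E) f g)
  (f_left : forall x, f (in_left x) = in_left (f x))
  (f_right : forall x, f (in_right x) = in_right (f x)) : INMor D E :=
  {| im_fun := f; im_scott := order_iso_scott_continuous H;
     im_left := f_left; im_right := f_right |}.

Section PointsOfIntervalDomain.
Variable X : GHPoset.
Let po := gh_po X.

Definition point_of_max_interval (p : max_points_of (interval_domain_of X)) : X :=
  lo (proj1_sig p).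

Definition max_interval_of_point (x : X) : max_points_of (interval_domain_of X) :=
  exist _ (point_interval po x) (proj2 (interval_maximal_iff po (point_interval po x)) eq_refl).

Lemma points_max_intervals_iso :
  order_iso (@gh_le (max_points_of (interval_domain_of X))) (@gh_le X)
    point_of_max_interval max_interval_of_point.
Proof.
  split; [|split; [|split]].
  - reflexivity.
  - intros p. apply max_point_eq, interval_eq; [reflexivity|]. simpl.
    apply (interval_maximal_iff po), (proj2_sig p).
  - intros p q [z [Ep Eq]]. unfold point_of_max_interval. rewrite <- Ep, <- Eq. exact (lo_le_hi z).
  - intros x y Hxy. exists (mkI Hxy). split; apply interval_eq; reflexivity.
Qed.

End PointsOfIntervalDomain.

Lemma points_functor_iso : @iso_to_identity G_cat
  (fun X => fobj max_functor (fobj interval_functor X))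
  (fun X Y f => fmap max_functor (fmap interval_functor f)).
Proof.
  exists (fun X => gmor_of_order_iso (points_max_intervals_iso X)),
         (fun X => gmor_of_order_iso (order_iso_sym (points_max_intervals_iso X))).
  split; [|split]; intros X; [intros x; reflexivity| |intros Y f p; reflexivity].
  intros p. apply (points_max_intervals_iso X).
Qed.

Section IntervalsOfMaximalPoints.
Variable D : IntervalDomain.
Let le := @in_le D.
Let L := @in_left D.
Let R := @in_right D.
Let po := in_po D.
Let ip := in_ip D.

(* An interval [p, q] of maximal points is realised by the unique z with L z = p, R z = q. *)
Definition element_of_interval (w : interval_domain_of (max_points_of D)) : D :=
  proj1_sig (constructive_indefinite_description
    (fun z => L z = proj1_sig (lo w) /\ R z = proj1_sig (hi w)) (lo_le_hi w)).

Lemma left_element_of_interval w : L (element_of_interval w) = proj1_sig (lo w).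
Proof. unfold element_of_interval. destruct constructive_indefinite_description as [z [Hl Hr]]. exact Hl. Qed.

Lemma right_element_of_interval w : R (element_of_interval w) = proj1_sig (hi w).
Proof. unfold element_of_interval. destruct constructive_indefinite_description as [z [Hl Hr]]. exact Hr. Qed.

Definition interval_of_element (z : D) : interval_domain_of (max_points_of D) :=
  @mkI _ (max_le L R) (max_left ip z) (max_right ip z) (end_le_ends L R z).

Lemma elements_intervals_iso :
  order_iso (@in_le (interval_domain_of (max_points_of D))) le
    element_of_interval interval_of_element.
Proof.
  split; [|split; [|split]].
  - intros z. apply (eq_of_ends po ip);
      rewrite ?left_element_of_interval, ?right_element_of_interval; reflexivity.
  - intros w. apply interval_eq; apply max_point_eq; simpl;
      [apply left_element_of_interval|apply right_element_of_interval].
  - intros w w' [H1 H2]. apply (le_of_end_le po ip).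
    + rewrite !left_element_of_interval. exact H1.
    + rewrite !right_element_of_interval. exact H2.
  - intros z z' H. destruct (end_le_of_le po ip H) as [H1 H2]. split; assumption.
Qed.

Lemma element_of_interval_left w :
  element_of_interval (in_left w) = L (element_of_interval w).
Proof.
  apply (eq_of_ends po ip).
  - rewrite left_element_of_interval, (left_left ip), left_element_of_interval. reflexivity.
  - rewrite right_element_of_interval, (right_left ip), left_element_of_interval. reflexivity.
Qed.

Lemma element_of_interval_right w :
  element_of_interval (in_right w) = R (element_of_interval w).
Proof.
  apply (eq_of_ends po ip).
  - rewrite left_element_of_interval, (left_right ip), right_element_of_interval. reflexivity.
  - rewrite right_element_of_interval, (right_right ip), right_element_of_interval. reflexivity.
Qed.

Lemma interval_of_element_left z : interval_of_element (L z) = in_left (interval_of_element z).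
Proof.
  apply interval_eq; apply max_point_eq; simpl.
  - apply (left_left ip).
  - apply (right_left ip).
Qed.

Lemma interval_of_element_right z : interval_of_element (R z) = in_right (interval_of_element z).
Proof.
  apply interval_eq; apply max_point_eq; simpl.
  - apply (left_right ip).
  - apply (right_right ip).
Qed.

End IntervalsOfMaximalPoints.

Lemma intervals_functor_iso : @iso_to_identity IN_cat
  (fun D => fobj interval_functor (fobj max_functor D))
  (fun D E f => fmap interval_functor (fmap max_functor f)).
Proof.
  exists (fun D => inmor_of_order_iso (elements_intervals_iso D)
                     (element_of_interval_left (D := D)) (element_of_interval_right (D := D))),
         (fun D => inmor_of_order_iso (order_iso_sym (elements_intervals_iso D))
                     (interval_of_element_left (D := D)) (interval_of_element_right (D := D))).
  split; [|split]; intros D; [intros z; apply (elements_intervals_iso D)..|].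
  intros E f w. apply (eq_of_ends (in_po E) (in_ip E)); simpl.
  - rewrite left_element_of_interval, <- (im_left f), left_element_of_interval. reflexivity.
  - rewrite right_element_of_interval, <- (im_right f), right_element_of_interval. reflexivity.
Qed.

Theorem mainTheorem16 : equivalent G_cat IN_cat.
Proof.
  exists interval_functor, max_functor.
  split; [exact points_functor_iso|exact intervals_functor_iso].
Qed.
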